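(* For every ordinal $\alpha$: if $(T_\alpha,P_\alpha)$ is consistent, then it is sound, i.e. for every $\mathcal L$-sentence $\varphi$, either $(\mathbb N,T_\alpha,P_\alpha)\not\models_{SK}\varphi\vee\neg\varphi$ or $(\mathbb N,T_\alpha,P_\alpha)\not\models_{SK}\mathscr P(\varphi)$.
   Context: Language. Let $\mathcal L_{\mathbb N}$ be the language of first-order Peano arithmetic and $\mathcal L=\mathcal L_{\mathbb N}\cup\{\mathrm T,\mathrm P\}$ with unary predicates $\mathrm T,\mathrm P$. $\mathcal L$-formulas are in Tait style: literals are $s=t$, $s\neq t$, $\mathrm Tt$, $\neg\mathrm Tt$, $\mathrm Pt$, $\neg\mathrm Pt$; formulas are built from literals by $\wedge,\vee,\forall,\exists$; negation of an arbitrary formula is defined by De Morgan dualities with $\neg\neg\varphi:=\varphi$. A standard Gödel numbering is fixed; $\#e$ is the code of $e$, $\ulcorner e\urcorner$ the numeral of $\#e$, $\mathrm{val}(t)$ the value of a closed term $t$, $\dot\neg$ the primitive recursive function with $\dot\neg(\#\varphi)=\#\neg\varphi$; $\mathrm T\varphi,\mathrm P\varphi$ abbreviate $\mathrm T\ulcorner\varphi\urcorner,\mathrm P\ulcorner\varphi\urcorner$. Semantics. A partial model is $(\mathbb N,T,P)$ with $\mathbb N$ the standard model and $T=(T^+,T^-)$, $P=(P^+,P^-)$ pairs of subsets of $\omega$. Strong Kleene satisfaction $\models_{SK}$: arithmetic literals evaluated in $\mathbb N$; $\mathrm Tt$ satisfied iff $\mathrm{val}(t)\in T^+$, $\neg\mathrm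 Tt$ iff $\mathrm{val}(t)\in T^-$, likewise for $\mathrm P$ with $P^\pm$; conjunction iff both, disjunction iff at least one, $\forall x\varphi(x)$ iff all numeral instances, $\exists x\varphi(x)$ iff some numeral instance. $(T,P)$ is consistent iff $T^+\cap T^-=\emptyset$ and $P^+\cap P^-=\emptyset$. Base paradoxicality. $\mathrm{PA}[\mathrm{SK}]$ is the two-sided sequent calculus for Strong Kleene logic with identity in $\mathcal L$ (initial sequents $\varphi\Rightarrow\varphi$, cut, weakening, the rule from $\Gamma\Rightarrow\Delta,\varphi$ infer $\neg\varphi,\Gamma\Rightarrow\Delta$, usual rules for $\wedge,\vee,\forall,\exists$, reflexivity $\Rightarrow t=t$, replacement from $\Gamma\Rightarrow\Delta,\varphi(t)$ infer $\Gamma\Rightarrow\Delta,s\neq t,\varphi(s)$) plus the initial sequents of Peano arithmetic and the induction rule for all $\mathcal L$-formulas. A sentence $\varphi$ is base paradoxical iff $\mathrm{PA}[\mathrm{SK}]$ derives $\varphi\Leftrightarrow\neg\mathrm T\varphi$ and $\neg\varphi\Leftrightarrow\mathrm T\varphi$ ($\Leftrightarrow$ meaning both sequents). $B(x)$ is an $\mathcal L_{\mathbb N}$-formula defining in $\mathbb N$ the set of codes of base paradoxical sentences, and $\Pi(x):=B(x)\vee B(\dot\neg x)$. Jump and sequence. Let $\mathscr P(x)$ be the $\mathcal L$-formula which is the disjunction of: (1) $x$ codes a sentence and $\Pi(x)$; (2) $x$ codes a sentence $\mathrm Tt$ ($t$ a closed term) and $\mathrm P(\mathrm{val}(t))$;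 (3) $x$ codes a sentence $\neg\mathrm Tt$ and $\mathrm P(\mathrm{val}(t))$; (4) $x$ codes a sentence $\psi\wedge\theta$ and $(\mathrm P\psi\wedge\mathrm P\theta)\vee(\mathrm T\psi\wedge\mathrm P\theta)\vee(\mathrm T\theta\wedge\mathrm P\psi)$; (5) $x$ codes a sentence $\psi\vee\theta$ and $(\mathrm P\psi\wedge\mathrm P\theta)\vee(\neg\mathrm T\psi\wedge\mathrm P\theta)\vee(\neg\mathrm T\theta\wedge\mathrm P\psi)$; (6) $x$ codes a sentence $\forall v\psi$ and $\exists y\,\mathrm P\psi(\dot y)\wedge\forall y(\mathrm P\psi(\dot y)\vee\mathrm T\psi(\dot y))$; (7) $x$ codes a sentence $\exists v\psi$ and $\exists y\,\mathrm P\psi(\dot y)\wedge\forall y(\mathrm P\psi(\dot y)\vee\neg\mathrm T\psi(\dot y))$; here $\psi(\dot y)$ is the code of the result of substituting the numeral of $y$ for $v$. Write $\mathscr P(\varphi)$ for $\mathscr P(\ulcorner\varphi\urcorner)$. Define $\Gamma_{\mathscr{TP}}(T,P)=\big((\{\#\varphi:(\mathbb N,T,P)\models_{SK}\varphi\},\{\#\varphi:(\mathbb N,T,P)\models_{SK}\neg\varphi\}),(\{\#\varphi:(\mathbb N,T,P)\models_{SK}\mathscr P(\varphi)\},\{\#\varphi:(\mathbb N,T,P)\models_{SK}\varphi\vee\neg\varphi\})\big)$, $\varphi$ ranging over $\mathcal L$-sentences. Define $(T_0,P_0)=((\emptyset,\emptyset),(\emptyset,\emptyset))$, $(T_{\beta+1},P_{\beta+1})=\Gamma_{\mathscr{TP}}(T_\beta,P_\beta)$,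 $(T_\lambda,P_\lambda)=\bigcup_{\beta<\lambda}(T_\beta,P_\beta)$ (componentwise union) for limit $\lambda$. *)

From Stdlib Require Import List Arith Cantor ClassicalEpsilon.
Import ListNotations.

Inductive term : Type :=
| tvar (n : nat)
| tzero
| tsucc (t : term)
| tplus (s t : term)
| tmult (s t : term).

Inductive form : Type :=
| fEq (s t : term) | fNeq (s t : term)
| fT (t : term) | fNT (t : term)
| fP (t : term) | fNP (t : term)
| fAnd (a b : form) | fOr (a b : form)
| fAll (a : form) | fEx (a : form).

Fixpoint neg (f : form) : form :=
  match f with
  | fEq s t => fNeq s t | fNeq s t => fEq s t
  | fT t => fNT t | fNT t => fT t
  | fP t => fNP t | fNP t => fP t
  | fAnd a b => fOr (neg a) (neg b)
  | fOr a b => fAnd (neg a) (neg b)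
  | fAll a => fEx (neg a)
  | fEx a => fAll (neg a)
  end.

Fixpoint tsubst (sg : nat -> term) (t : term) : term :=
  match t with
  | tvar n => sg n
  | tzero => tzero
  | tsucc t => tsucc (tsubst sg t)
  | tplus s t => tplus (tsubst sg s) (tsubst sg t)
  | tmult s t => tmult (tsubst sg s) (tsubst sg t)
  end.

Definition up (sg : nat -> term) : nat -> term :=
  fun n => match n with
           | 0 => tvar 0
           | S k => tsubst (fun m => tvar (S m)) (sg k)
           end.

Fixpoint fsubst (sg : nat -> term) (f : form) : form :=
  match f with
  | fEq s t => fEq (tsubst sg s) (tsubst sg t)
  | fNeq s t => fNeq (tsubst sg s) (tsubst sg t)
  | fT t => fT (tsubst sg t) | fNT t => fNT (tsubst sg t)
  | fP t => fP (tsubst sg t) | fNP t => fNP (tsubst sg t)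
  | fAnd a b => fAnd (fsubst sg a) (fsubst sg b)
  | fOr a b => fOr (fsubst sg a) (fsubst sg b)
  | fAll a => fAll (fsubst (up sg) a)
  | fEx a => fEx (fsubst (up sg) a)
  end.

Definition inst (t : term) : nat -> term :=
  fun n => match n with 0 => t | S k => tvar k end.
(* shift all free variables up by one (eigenvariable freshness) *)
Definition shiftf (f : form) : form := fsubst (fun m => tvar (S m)) f.
Definition succ0 : nat -> term :=
  fun n => match n with 0 => tsucc (tvar 0) | k => tvar k end.

Fixpoint tclosed (k : nat) (t : term) : Prop :=
  match t with
  | tvar n => n < k
  | tzero => True
  | tsucc t => tclosed k t
  | tplus s t | tmult s t => tclosed k s /\ tclosed k t
  end.

Fixpoint fclosed (k : nat) (f : form) : Prop :=
  match f with
  | fEq s t | fNeq s t => tclosed k s /\ tclosed k t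
  | fT t | fNT t | fP t | fNP t => tclosed k t
  | fAnd a b | fOr a b => fclosed k a /\ fclosed k b
  | fAll a | fEx a => fclosed (S k) a
  end.

Definition sentence (f : form) : Prop := fclosed 0 f.

Fixpoint num (n : nat) : term :=
  match n with 0 => tzero | S n => tsucc (num n) end.

Definition cp (a b : nat) : nat := Cantor.to_nat (a, b).

Fixpoint tcode (t : term) : nat :=
  match t with
  | tvar n => cp 0 n
  | tzero => cp 1 0
  | tsucc t => cp 2 (tcode t)
  | tplus s t => cp 3 (cp (tcode s) (tcode t))
  | tmult s t => cp 4 (cp (tcode s) (tcode t))
  end.

Fixpoint code (f : form) : nat :=
  match f with
  | fEq s t => cp 0 (cp (tcode s) (tcode t))
  | fNeq s t => cp 1 (cp (tcode s) (tcode t))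
  | fT t => cp 2 (tcode t) | fNT t => cp 3 (tcode t)
  | fP t => cp 4 (tcode t) | fNP t => cp 5 (tcode t)
  | fAnd a b => cp 6 (cp (code a) (code b))
  | fOr a b => cp 7 (cp (code a) (code b))
  | fAll a => cp 8 (code a)
  | fEx a => cp 9 (code a)
  end.

Definition quote (f : form) : term := num (code f).

Fixpoint eval (rho : nat -> nat) (t : term) : nat :=
  match t with
  | tvar n => rho n
  | tzero => 0
  | tsucc t => S (eval rho t)
  | tplus s t => eval rho s + eval rho t
  | tmult s t => eval rho s * eval rho t
  end.

Definition val (t : term) : nat := eval (fun _ => 0) t.

Record pmodel : Type := PM {
  Tp : nat -> Prop; Tn : nat -> Prop;   (* T = (T+, T-) *)
  Pp : nat -> Prop; Pn : nat -> Prop }. (* P = (P+, P-) *)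

Definition scons (n : nat) (rho : nat -> nat) : nat -> nat :=
  fun k => match k with 0 => n | S k => rho k end.

Fixpoint satE (M : pmodel) (rho : nat -> nat) (f : form) : Prop :=
  match f with
  | fEq s t => eval rho s = eval rho t
  | fNeq s t => eval rho s <> eval rho t
  | fT t => Tp M (eval rho t) | fNT t => Tn M (eval rho t)
  | fP t => Pp M (eval rho t) | fNP t => Pn M (eval rho t)
  | fAnd a b => satE M rho a /\ satE M rho b
  | fOr a b => satE M rho a \/ satE M rho b
  | fAll a => forall n, satE M (scons n rho) a
  | fEx a => exists n, satE M (scons n rho) a
  end.

Definition sat (M : pmodel) (f : form) : Prop := satE M (fun _ => 0) f.

Definition consistent (M : pmodel) : Prop :=
  (forall n, ~ (Tp M n /\ Tn M n)) /\ (forall n, ~ (Pp M n /\ Pn M n)).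

Inductive PAax : list form -> list form -> Prop :=
| pa_succ0 s : PAax [] [fNeq (tsucc s) tzero]
| pa_succinj s t : PAax [fEq (tsucc s) (tsucc t)] [fEq s t]
| pa_plus0 s : PAax [] [fEq (tplus s tzero) s]
| pa_plusS s t : PAax [] [fEq (tplus s (tsucc t)) (tsucc (tplus s t))]
| pa_mult0 s : PAax [] [fEq (tmult s tzero) tzero]
| pa_multS s t : PAax [] [fEq (tmult s (tsucc t)) (tplus (tmult s t) s)]
| pa_eqdec s t : PAax [] [fEq s t; fNeq s t].

(* sequents Gamma => Delta, treated as sets via the structural rule *)
Inductive deriv : list form -> list form -> Prop :=
| d_id f : deriv [f] [f]
| d_struct G D G' D' : deriv G D -> incl G G' -> incl D D' -> deriv G' D'
| d_cut G D f : deriv G (f :: D) -> deriv (f :: G) D -> deriv G D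
| d_neg G D f : deriv G (f :: D) -> deriv (neg f :: G) D
| d_andL G D a b : deriv (a :: b :: G) D -> deriv (fAnd a b :: G) D
| d_andR G D a b : deriv G (a :: D) -> deriv G (b :: D) -> deriv G (fAnd a b :: D)
| d_orL G D a b : deriv (a :: G) D -> deriv (b :: G) D -> deriv (fOr a b :: G) D
| d_orR G D a b : deriv G (a :: b :: D) -> deriv G (fOr a b :: D)
| d_allL G D a t : deriv (fsubst (inst t) a :: G) D -> deriv (fAll a :: G) D
| d_allR G D a : deriv (map shiftf G) (a :: map shiftf D) -> deriv G (fAll a :: D)
| d_exL G D a : deriv (a :: map shiftf G) (map shiftf D) -> deriv (fEx a :: G) D
| d_exR G D a t : deriv G (fsubst (inst t) a :: D) -> deriv G (fEx a :: D)
| d_refl t : deriv [] [fEq t t]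
| d_repl G D a s t :
    deriv G (fsubst (inst t) a :: D) ->
    deriv G (fNeq s t :: fsubst (inst s) a :: D)
| d_PA G D : PAax G D -> deriv G D
| d_ind G D a t :
    deriv (a :: map shiftf G) (fsubst succ0 a :: map shiftf D) ->
    deriv (fsubst (inst tzero) a :: G) (fsubst (inst t) a :: D).

Definition base_paradoxical (f : form) : Prop :=
  sentence f /\
  deriv [f] [fNT (quote f)] /\ deriv [fNT (quote f)] [f] /\
  deriv [neg f] [fT (quote f)] /\ deriv [fT (quote f)] [neg f].

(* the set defined in N by B(x) *)
Definition Bset (n : nat) : Prop :=
  exists f, base_paradoxical f /\ n = code f.

(* (N,T,P) |=_SK P-script(#f), for a sentence f; arithmetic subformulas
   of P-script are bivalent in N and are evaluated directly. *)
Definition satPscr (M : pmodel) (f : form) : Prop :=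
  (Bset (code f) \/ Bset (code (neg f)))
  \/ (exists t, f = fT t /\ Pp M (val t))
  \/ (exists t, f = fNT t /\ Pp M (val t))
  \/ (exists a b, f = fAnd a b /\
        ((Pp M (code a) /\ Pp M (code b)) \/ (Tp M (code a) /\ Pp M (code b))
         \/ (Tp M (code b) /\ Pp M (code a))))
  \/ (exists a b, f = fOr a b /\
        ((Pp M (code a) /\ Pp M (code b)) \/ (Tn M (code a) /\ Pp M (code b))
         \/ (Tn M (code b) /\ Pp M (code a))))
  \/ (exists a, f = fAll a /\
        (exists y, Pp M (code (fsubst (inst (num y)) a))) /\
        (forall y, Pp M (code (fsubst (inst (num y)) a))
                   \/ Tp M (code (fsubst (inst (num y)) a))))
  \/ (exists a, f = fEx a /\
        (exists y, Pp M (code (fsubst (inst (num y)) a))) /\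
        (forall y, Pp M (code (fsubst (inst (num y)) a))
                   \/ Tn M (code (fsubst (inst (num y)) a)))).

Definition jump (M : pmodel) : pmodel := {|
  Tp := fun n => exists f, sentence f /\ n = code f /\ sat M f;
  Tn := fun n => exists f, sentence f /\ n = code f /\ sat M (neg f);
  Pp := fun n => exists f, sentence f /\ n = code f /\ satPscr M f;
  Pn := fun n => exists f, sentence f /\ n = code f /\ sat M (fOr f (neg f)) |}.

Definition is_pred {W : Type} (R : W -> W -> Prop) (v w : W) : Prop :=
  R v w /\ (forall u, R u w -> u = v \/ R u v).

Definition stage_step {W : Type} (R : W -> W -> Prop) (w : W)
  (rec : forall v, R v w -> pmodel) : pmodel :=
  match excluded_middle_informative (exists v, is_pred R v w) with
  | left H =>
      let (v, Hv) := constructive_indefinite_description _ H in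
      jump (rec v (proj1 Hv))                        (* successor stage *)
  | right _ => {|                                    (* zero / limit: union *)
      Tp := fun n => exists v (h : R v w), Tp (rec v h) n;
      Tn := fun n => exists v (h : R v w), Tn (rec v h) n;
      Pp := fun n => exists v (h : R v w), Pp (rec v h) n;
      Pn := fun n => exists v (h : R v w), Pn (rec v h) n |}
  end.

(* stage W R wf w = (T_alpha, P_alpha) where alpha is the order type of
   the initial segment {v | R v w} *)
Definition stage {W : Type} (R : W -> W -> Prop) (wf : well_founded R) : W -> pmodel :=
  Fix wf (fun _ => pmodel) (stage_step R).

(* Every stage (T_a, P_a) lies below its own jump, (T_a, P_a) <= Gamma(T_a, P_a), and
   has T^+ and T^- included in P^-; both properties survive jumps and unions.
   In a consistent model with these two properties, every sentence satisfying the
   P-script is undecided (neither it nor its negation is true), by induction on its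
   size.  Base paradoxical sentences are undecided because PA[SK] is sound in
   consistent partial models, so phi <=> ~T(phi) would put a true phi into T^-, and
   ~phi <=> T(phi) a false one into T^+.  An atom T t or ~T t with val t in P^+ is
   undecided because T^+ and T^- lie in P^-, which is disjoint from P^+.  The compound
   clauses reduce to the induction hypothesis, members of T^+ being true and members
   of T^- false. *)
From Stdlib Require Import List Arith Lia Cantor Classical FunctionalExtensionality ClassicalEpsilon.
Import ListNotations.

Lemma cp_inj a b c d : cp a b = cp c d -> a = c /\ b = d.
Proof.
  intro H.
  assert (E : Cantor.of_nat (cp a b) = Cantor.of_nat (cp c d)) by now rewrite H.
  unfold cp in E; rewrite !Cantor.cancel_of_to in E.
  now injection E.
Qed.

Lemma tcode_inj s t : tcode s = tcode t -> s = t.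
Proof.
  revert t; induction s; destruct t; simpl; intro H;
    apply cp_inj in H as [H1 H2]; try discriminate;
    try apply cp_inj in H2 as [H2 H3]; f_equal; auto.
Qed.

Lemma code_inj f g : code f = code g -> f = g.
Proof.
  revert g; induction f; destruct g; simpl; intro H;
    apply cp_inj in H as [H1 H2]; try discriminate;
    try apply cp_inj in H2 as [H2 H3]; f_equal; auto using tcode_inj.
Qed.

Lemma neg_involutive f : neg (neg f) = f.
Proof. induction f; simpl; f_equal; auto. Qed.

Lemma neg_fsubst sg f : neg (fsubst sg f) = fsubst sg (neg f).
Proof. revert sg; induction f; intro sg; simpl; f_equal; auto. Qed.

Fixpoint fsize (f : form) : nat :=
  match f with
  | fAnd a b | fOr a b => S (fsize a + fsize b)
  | fAll a | fEx a => S (fsize a)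
  | _ => 0
  end.

Lemma fsize_fsubst sg f : fsize (fsubst sg f) = fsize f.
Proof. revert sg; induction f; intro sg; simpl; auto. Qed.

Lemma eval_tsubst rho sg t : eval rho (tsubst sg t) = eval (fun n => eval rho (sg n)) t.
Proof. induction t; simpl; auto. Qed.

Lemma eval_num rho n : eval rho (num n) = n.
Proof. induction n; simpl; auto. Qed.

Lemma eval_up rho n sg :
  (fun m => eval (scons n rho) (up sg m)) = scons n (fun m => eval rho (sg m)).
Proof.
  apply functional_extensionality; intros [|k]; simpl; auto.
  now rewrite eval_tsubst.
Qed.

Lemma satE_fsubst M rho sg f :
  satE M rho (fsubst sg f) <-> satE M (fun n => eval rho (sg n)) f.
Proof.
  revert rho sg; induction f; intros rho sg; simpl; rewrite ?eval_tsubst; try tauto.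
  - now rewrite IHf1, IHf2.
  - now rewrite IHf1, IHf2.
  - now setoid_rewrite IHf; setoid_rewrite eval_up.
  - now setoid_rewrite IHf; setoid_rewrite eval_up.
Qed.

Lemma satE_inst M rho t a : satE M rho (fsubst (inst t) a) <-> satE M (scons (eval rho t) rho) a.
Proof.
  rewrite satE_fsubst.
  replace (fun n => eval rho (inst t n)) with (scons (eval rho t) rho); [tauto|].
  apply functional_extensionality; now intros [|k].
Qed.

Lemma satE_inst_num M rho y a : satE M rho (fsubst (inst (num y)) a) <-> satE M (scons y rho) a.
Proof. now rewrite satE_inst, eval_num. Qed.

Lemma satE_succ0 M rho m a : satE M (scons m rho) (fsubst succ0 a) <-> satE M (scons (S m) rho) a.
Proof.
  rewrite satE_fsubst.
  replace (fun n => eval (scons m rho) (succ0 n)) with (scons (S m) rho); [tauto|].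
  apply functional_extensionality; now intros [|k].
Qed.

Lemma satE_shiftf M rho n f : satE M (scons n rho) (shiftf f) <-> satE M rho f.
Proof. unfold shiftf; now rewrite satE_fsubst. Qed.

Lemma Forall_satE_shiftf M rho n G :
  Forall (satE M (scons n rho)) (map shiftf G) <-> Forall (satE M rho) G.
Proof. rewrite Forall_map; split; apply Forall_impl; intro g; apply satE_shiftf. Qed.

Lemma Exists_satE_shiftf M rho n D :
  Exists (satE M (scons n rho)) (map shiftf D) <-> Exists (satE M rho) D.
Proof. rewrite Exists_map; split; apply Exists_impl; intro d; apply satE_shiftf. Qed.

Lemma consistent_satE_neg M rho f : consistent M -> ~ (satE M rho f /\ satE M rho (neg f)).
Proof. intros [HT HP]; revert rho; induction f; intro rho; simpl; firstorder. Qed.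

Definition valid (M : pmodel) (G D : list form) : Prop :=
  forall rho, Forall (satE M rho) G -> Exists (satE M rho) D.

Lemma valid_allR M G D a :
  valid M (map shiftf G) (a :: map shiftf D) -> valid M G (fAll a :: D).
Proof.
  intros H rho HG; rewrite Exists_cons.
  destruct (classic (Exists (satE M rho) D)) as [HD|HD]; [now right|left].
  intro n; specialize (H (scons n rho)).
  rewrite Forall_satE_shiftf, Exists_cons, Exists_satE_shiftf in H; tauto.
Qed.

Lemma valid_exL M G D a :
  valid M (a :: map shiftf G) (map shiftf D) -> valid M (fEx a :: G) D.
Proof.
  intros H rho HG; apply Forall_cons_iff in HG as [[n Ha] HG].
  specialize (H (scons n rho)).
  rewrite Forall_cons_iff, Forall_satE_shiftf, Exists_satE_shiftf in H; auto.
Qed.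

Lemma valid_ind M G D a t :
  valid M (a :: map shiftf G) (fsubst succ0 a :: map shiftf D) ->
  valid M (fsubst (inst tzero) a :: G) (fsubst (inst t) a :: D).
Proof.
  intros H rho HG; rewrite Forall_cons_iff, satE_inst in HG; destruct HG as [H0 HG].
  rewrite Exists_cons, satE_inst.
  destruct (classic (Exists (satE M rho) D)) as [HD|HD]; [now right|left].
  induction (eval rho t) as [|m IH]; [exact H0|].
  specialize (H (scons m rho)).
  rewrite Forall_cons_iff, Forall_satE_shiftf, Exists_cons, Exists_satE_shiftf, satE_succ0 in H.
  tauto.
Qed.

Lemma valid_PAax M G D : PAax G D -> valid M G D.
Proof.
  intros [] rho HG; rewrite ?Forall_cons_iff in HG; simpl in HG;
    rewrite ?Exists_cons; simpl; lia.
Qed.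

Lemma deriv_sound M G D : consistent M -> deriv G D -> valid M G D.
Proof.
  intros HC; induction 1;
    try solve [ now apply valid_allR | now apply valid_exL
              | now apply valid_ind | now apply valid_PAax ];
    intros rho HG; rewrite ?Forall_cons_iff in HG; rewrite ?Exists_cons; simpl in *.
  - tauto.
  - eapply incl_Exists, IHderiv, incl_Forall; eauto.
  - specialize (IHderiv1 rho HG); rewrite Exists_cons in IHderiv1.
    destruct IHderiv1; auto.
  - destruct HG as [Hn HG]; specialize (IHderiv rho HG); rewrite Exists_cons in IHderiv.
    destruct IHderiv; auto.
    exfalso; apply (consistent_satE_neg M rho f HC); auto.
  - apply IHderiv; rewrite !Forall_cons_iff; tauto.
  - specialize (IHderiv1 rho HG); specialize (IHderiv2 rho HG).
    rewrite Exists_cons in IHderiv1, IHderiv2; tauto.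
  - destruct HG as [[Ha|Hb] HG]; [apply IHderiv1 | apply IHderiv2]; auto.
  - specialize (IHderiv rho HG); rewrite !Exists_cons in IHderiv; tauto.
  - destruct HG as [Ha HG]; apply IHderiv, Forall_cons; auto.
    now apply satE_inst.
  - specialize (IHderiv rho HG); rewrite Exists_cons, satE_inst in IHderiv.
    destruct IHderiv; eauto.
  - auto.
  - specialize (IHderiv rho HG); rewrite Exists_cons, satE_inst in IHderiv.
    rewrite satE_inst.
    destruct (Nat.eq_dec (eval rho s) (eval rho t)) as [->|]; tauto.
Qed.

Record pm_le (M N : pmodel) : Prop := {
  le_Tp : forall n, Tp M n -> Tp N n;
  le_Tn : forall n, Tn M n -> Tn N n;
  le_Pp : forall n, Pp M n -> Pp N n;
  le_Pn : forall n, Pn M n -> Pn N n }.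

Lemma satE_mono M N rho f : pm_le M N -> satE M rho f -> satE N rho f.
Proof. intros []; revert rho; induction f; simpl; firstorder. Qed.

Lemma satPscr_mono M N f : pm_le M N -> satPscr M f -> satPscr N f.
Proof.
  intros [HT HTn HP HPn]; unfold satPscr.
  intros [X|[X|[X|[X|[X|[X|X]]]]]]; [left | do 1 right; left | do 2 right; left
    | do 3 right; left | do 4 right; left | do 5 right; left | do 6 right ];
    firstorder.
Qed.

Lemma jump_mono M N : pm_le M N -> pm_le (jump M) (jump N).
Proof.
  intro H; split; simpl; intros n [f (Hf & -> & X)]; exists f; repeat split; auto;
    unfold sat in *; eauto using satE_mono, satPscr_mono.
Qed.

Record truth_in_Pn (M : pmodel) : Prop := {
  Tp_Pn : forall n, Tp M n -> Pn M n;
  Tn_Pn : forall n, Tn M n -> Pn M n }.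

Lemma jump_truth_in_Pn M : truth_in_Pn (jump M).
Proof. split; simpl; intros n [f (Hf & -> & X)]; exists f; unfold sat; simpl; auto. Qed.

Definition pm_union {I : Type} {J : I -> Type} (F : forall i, J i -> pmodel) : pmodel := {|
  Tp := fun n => exists i (j : J i), Tp (F i j) n;
  Tn := fun n => exists i (j : J i), Tn (F i j) n;
  Pp := fun n => exists i (j : J i), Pp (F i j) n;
  Pn := fun n => exists i (j : J i), Pn (F i j) n |}.

Section Union.
Variables (I : Type) (J : I -> Type) (F : forall i, J i -> pmodel).

Lemma pm_le_union i j : pm_le (F i j) (pm_union F).
Proof. split; simpl; eauto. Qed.

Lemma union_prefixpoint :
  (forall i j, pm_le (F i j) (jump (F i j))) -> pm_le (pm_union F) (jump (pm_union F)).
Proof.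
  intro H; split; intros n (i & j & X);
    apply (jump_mono _ _ (pm_le_union i j)), H; exact X.
Qed.

Lemma union_truth_in_Pn : (forall i j, truth_in_Pn (F i j)) -> truth_in_Pn (pm_union F).
Proof. intro H; split; intros n (i & j & X); exists i, j; [apply Tp_Pn | apply Tn_Pn]; auto. Qed.

End Union.

Lemma stage_unfold {W} (R : W -> W -> Prop) (wf : well_founded R) w :
  stage R wf w = stage_step R w (fun v _ => stage R wf v).
Proof.
  unfold stage; rewrite Fix_eq; [reflexivity|].
  intros x f g Hfg.
  replace g with f; [reflexivity|].
  apply functional_extensionality_dep; intro v; apply functional_extensionality_dep; auto.
Qed.

Lemma stage_cases {W} (R : W -> W -> Prop) (wf : well_founded R) w :
  (exists v, R v w /\ stage R wf w = jump (stage R wf v)) \/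
  stage R wf w = pm_union (fun v (_ : R v w) => stage R wf v).
Proof.
  rewrite stage_unfold; unfold stage_step.
  destruct excluded_middle_informative; [left|now right].
  destruct constructive_indefinite_description as [v [Hwv _]]; eauto.
Qed.

Lemma stage_invariant {W} (R : W -> W -> Prop) (wf : well_founded R) w :
  pm_le (stage R wf w) (jump (stage R wf w)) /\ truth_in_Pn (stage R wf w).
Proof.
  induction w as [w IH] using (well_founded_induction wf).
  destruct (stage_cases R wf w) as [(v & Hvw & ->)| ->].
  - split; [apply jump_mono, IH, Hvw | apply jump_truth_in_Pn].
  - split; [apply union_prefixpoint | apply union_truth_in_Pn]; intros v Hvw; apply IH, Hvw.
Qed.

Definition undecided (M : pmodel) (f : form) : Prop := ~ sat M f /\ ~ sat M (neg f).

Lemma sat_quote_fT M f : sat M (fT (quote f)) <-> Tp M (code f).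
Proof. unfold sat, quote; simpl; now rewrite eval_num. Qed.

Lemma sat_quote_fNT M f : sat M (fNT (quote f)) <-> Tn M (code f).
Proof. unfold sat, quote; simpl; now rewrite eval_num. Qed.

Lemma sat_fAll M a : sat M (fAll a) <-> forall y, sat M (fsubst (inst (num y)) a).
Proof. unfold sat; simpl; now setoid_rewrite satE_inst_num. Qed.

Lemma sat_fEx_neg M a : sat M (fEx (neg a)) <-> exists y, sat M (neg (fsubst (inst (num y)) a)).
Proof. unfold sat; simpl; now setoid_rewrite neg_fsubst; setoid_rewrite satE_inst_num. Qed.

Lemma sat_fEx M a : sat M (fEx a) <-> exists y, sat M (fsubst (inst (num y)) a).
Proof. unfold sat; simpl; now setoid_rewrite satE_inst_num. Qed.

Lemma sat_fAll_neg M a : sat M (fAll (neg a)) <-> forall y, sat M (neg (fsubst (inst (num y)) a)).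
Proof. unfold sat; simpl; now setoid_rewrite neg_fsubst; setoid_rewrite satE_inst_num. Qed.

Section Soundness.
Variable M : pmodel.
Hypotheses (HC : consistent M) (Hpre : pm_le M (jump M)) (Htr : truth_in_Pn M).

Lemma sat_not_sat_neg g : sat M g -> ~ sat M (neg g).
Proof. intros H Hn; exact (consistent_satE_neg M _ g HC (conj H Hn)). Qed.

Lemma Tp_sat g : Tp M (code g) -> sat M g.
Proof. intro H; destruct (le_Tp _ _ Hpre _ H) as (f & _ & E & X); now apply code_inj in E as ->. Qed.

Lemma Tn_sat_neg g : Tn M (code g) -> sat M (neg g).
Proof. intro H; destruct (le_Tn _ _ Hpre _ H) as (f & _ & E & X); now apply code_inj in E as ->. Qed.

Lemma Pp_satPscr g : Pp M (code g) -> satPscr M g.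
Proof. intro H; destruct (le_Pp _ _ Hpre _ H) as (f & _ & E & X); now apply code_inj in E as ->. Qed.

Lemma Tp_not_sat_neg g : Tp M (code g) -> ~ sat M (neg g).
Proof. intro H; apply sat_not_sat_neg, Tp_sat, H. Qed.

Lemma Tn_not_sat g : Tn M (code g) -> ~ sat M g.
Proof. intros H Hg; apply (sat_not_sat_neg g Hg), Tn_sat_neg, H. Qed.

Lemma deriv_sat f g : deriv [f] [g] -> sat M f -> sat M g.
Proof.
  intros D H.
  pose proof (deriv_sound M _ _ HC D (fun _ => 0) (Forall_cons _ H (Forall_nil _))) as X.
  rewrite Exists_cons, Exists_nil in X; tauto.
Qed.

Lemma base_paradoxical_undecided f : base_paradoxical f -> undecided M f.
Proof.
  intros (_ & Hf & _ & Hnf & _); split; intro H.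
  - apply (Tn_not_sat f); [apply sat_quote_fNT, (deriv_sat _ _ Hf) | ]; exact H.
  - apply (Tp_not_sat_neg f); [apply sat_quote_fT, (deriv_sat _ _ Hnf) | ]; exact H.
Qed.

Lemma Pp_val_undecided t : Pp M (val t) -> undecided M (fT t) /\ undecided M (fNT t).
Proof.
  intro H.
  assert (HT : ~ sat M (fT t)) by (intro X; apply (proj2 HC (val t)); split; [|apply Tp_Pn]; auto).
  assert (HN : ~ sat M (fNT t)) by (intro X; apply (proj2 HC (val t)); split; [|apply Tn_Pn]; auto).
  split; split; assumption.
Qed.

Lemma undecided_fAnd a b :
  (Pp M (code a) /\ Pp M (code b)) \/ (Tp M (code a) /\ Pp M (code b))
    \/ (Tp M (code b) /\ Pp M (code a)) ->
  (Pp M (code a) -> undecided M a) -> (Pp M (code b) -> undecided M b) ->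
  undecided M (fAnd a b).
Proof.
  intros X IHa IHb.
  destruct X as [[A B]|[[A B]|[A B]]];
    [apply IHa in A | apply Tp_not_sat_neg in A | apply Tp_not_sat_neg in A];
    [apply IHb in B | apply IHb in B | apply IHa in B];
    unfold undecided, sat in *; simpl; tauto.
Qed.

Lemma undecided_fOr a b :
  (Pp M (code a) /\ Pp M (code b)) \/ (Tn M (code a) /\ Pp M (code b))
    \/ (Tn M (code b) /\ Pp M (code a)) ->
  (Pp M (code a) -> undecided M a) -> (Pp M (code b) -> undecided M b) ->
  undecided M (fOr a b).
Proof.
  intros X IHa IHb.
  destruct X as [[A B]|[[A B]|[A B]]];
    [apply IHa in A | apply Tn_not_sat in A | apply Tn_not_sat in A];
    [apply IHb in B | apply IHb in B | apply IHa in B];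
    unfold undecided, sat in *; simpl; tauto.
Qed.

Lemma undecided_fAll a :
  (exists y, Pp M (code (fsubst (inst (num y)) a))) ->
  (forall y, Pp M (code (fsubst (inst (num y)) a)) \/ Tp M (code (fsubst (inst (num y)) a))) ->
  (forall y, Pp M (code (fsubst (inst (num y)) a)) -> undecided M (fsubst (inst (num y)) a)) ->
  undecided M (fAll a).
Proof.
  intros [y Y] X IH; split; simpl.
  - rewrite sat_fAll; intro H; apply (proj1 (IH y Y)), H.
  - rewrite sat_fEx_neg; intros [m Hm].
    destruct (X m) as [Z|Z]; [apply (proj2 (IH m Z)) | apply (Tp_not_sat_neg _ Z)]; exact Hm.
Qed.

Lemma undecided_fEx a :
  (exists y, Pp M (code (fsubst (inst (num y)) a))) ->
  (forall y, Pp M (code (fsubst (inst (num y)) a)) \/ Tn M (code (fsubst (inst (num y)) a))) ->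
  (forall y, Pp M (code (fsubst (inst (num y)) a)) -> undecided M (fsubst (inst (num y)) a)) ->
  undecided M (fEx a).
Proof.
  intros [y Y] X IH; split; simpl.
  - rewrite sat_fEx; intros [m Hm].
    destruct (X m) as [Z|Z]; [apply (proj1 (IH m Z)) | apply (Tn_not_sat _ Z)]; exact Hm.
  - rewrite sat_fAll_neg; intro H; apply (proj2 (IH y Y)), H.
Qed.

Lemma satPscr_undecided f : satPscr M f -> undecided M f.
Proof.
  induction f as [f IH] using (well_founded_induction (well_founded_ltof _ fsize)).
  assert (IHP : forall g, fsize g < fsize f -> Pp M (code g) -> undecided M g)
    by eauto using Pp_satPscr.
  intros [X|[X|[X|[X|[X|[X|X]]]]]].
  - destruct X as [(g & Hg & E)|(g & Hg & E)]; apply code_inj in E as <-.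
    + now apply base_paradoxical_undecided.
    + apply base_paradoxical_undecided in Hg.
      unfold undecided in *; rewrite neg_involutive in Hg; tauto.
  - destruct X as (t & -> & X); now apply Pp_val_undecided.
  - destruct X as (t & -> & X); now apply Pp_val_undecided.
  - destruct X as (a & b & -> & X); apply undecided_fAnd; auto; apply IHP; simpl; lia.
  - destruct X as (a & b & -> & X); apply undecided_fOr; auto; apply IHP; simpl; lia.
  - destruct X as (a & -> & Y & X); apply undecided_fAll; auto.
    intro y; apply IHP; rewrite fsize_fsubst; simpl; lia.
  - destruct X as (a & -> & Y & X); apply undecided_fEx; auto.
    intro y; apply IHP; rewrite fsize_fsubst; simpl; lia.
Qed.

End Soundness.

Theorem mainTheorem7 :
  forall (W : Type) (R : W -> W -> Prop) (Rwf : well_founded R)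
         (Rtrans : forall x y z, R x y -> R y z -> R x z)
         (Rtot : forall x y, R x y \/ x = y \/ R y x)
         (w : W),
    consistent (stage R Rwf w) ->
    forall f : form, sentence f ->
      ~ sat (stage R Rwf w) (fOr f (neg f)) \/ ~ satPscr (stage R Rwf w) f.
Proof.
  intros W R Rwf _ _ w HC f _.
  destruct (stage_invariant R Rwf w) as [Hpre Htr].
  destruct (classic (satPscr (stage R Rwf w) f)) as [HP|HP]; [left|right; exact HP].
  pose proof (satPscr_undecided _ HC Hpre Htr f HP) as [Hf Hnf].
  unfold sat in *; simpl; tauto.
Qed.
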